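(* Let $n>2$ be even, let $G$ be a group of order $2n$ containing a cyclic subgroup $H$ of index $2$, let $j$ be the unique involution of $H$, and let $\{h_1,\dots,h_{n/2}\}$ be a set of representatives of the cosets of $\{1,j\}$ in $H$. Let $\Sigma=\{S_1,\dots,S_r\}$ be a starter in $G$ with associated subgroups $H_1,\dots,H_r$ such that $S_1=\{e\}$ with $\partial e=\{j\}$, and let $\mathcal F$ be the associated $G$-regular $1$-factorization, with fixed $1$-factor $F_1=Orb_G(e)$ and, for $i\ge2$, the $1$-factors $F_i^1,\dots,F_i^{t_i}$ forming the $G$-orbit of $F_i=\bigcup_{f\in S_i}Orb_{H_i}(f)$, where $t_i=[G:H_i]$. Let $R=R_2\cup\dots\cup R_r$ be a subgraph of $K_{2n}$ such that: (1) for each $i\in\{2,\dots,r\}$, $R_i$ consists of $t_i$ edges, one in each of the $1$-factors $F_i^1,\dots,F_i^{t_i}$, and the set of distinct elements of $\partial R_i$ equals $\partial S_i$; (2) if $l$ is a long edge of $R_i$ ($2\le i\le r$), there is exactly one edge $l'\in R_i$ with $\partial l=\partial l'$ and $l'\notin Orb_H(l)$; if $l$ is a short edge of $R_i$, it is the unique edge of $R_i$ with difference set $\partial l$; (3) there exist two distinct edges $e_1,e_2$ of $F_1$ with $Orb_H(e_1)\cap Orb_H(e_2)=\emptyset$ such that both $R\cup\{e_1\}$ and $R\cup\{e_2\}$ are spanning connected subgraphs of $K_{2n}$. Put $T_1=R\cup\{e_1\}$ and $T_2=Rj\cup\{e_2\}$. Then $\mathcal T=\{T_1h_1,\dots,T_1h_{n/2}\}\cup\{T_2h_1,\dots,T_2h_{n/2}\}$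 is a complete set of rainbow spanning trees for $\mathcal F$.
   Context: Vertices of $K_{2n}$ are the elements of $G$; $G$ acts by right multiplication: $[x,y]\cdot g=[xg,yg]$, and for a set $U$ of edges $Ug=\{[xg,yg]:[x,y]\in U\}$. $Orb_K(f)$ denotes the orbit of an edge $f$ under a subgroup $K$. An edge $[x,y]$ is long if its $G$-orbit has length $2n$ and short if it has length $n$ (equivalently $x^{-1}y$ is an involution; this involution is the one associated with the short edge). Define $\partial([x,y])=\{xy^{-1},yx^{-1}\}$ if the edge is long and $\{xy^{-1}\}$ if short; $\phi([x,y])=\{x,y\}$ if long and $\{x\}$ if short; for a set $S$ of edges $\partial S,\phi(S)$ are the (multiset) unions. A starter in $G$ is a family $\{S_1,\dots,S_k\}$ of sets of edges with subgroups $H_1,\dots,H_k$ such that (i) $\partial S_1\cup\dots\cup\partial S_k=G\setminus\{1\}$ (as a set, without repetition); (ii) each $\phi(S_i)$ is a left transversal of $H_i$ in $G$; (iii) each $H_i$ contains the involutions associated with the short edges of $S_i$. The associated $G$-regular $1$-factorization consists of the $G$-orbits of the $1$-factors $F_i=\bigcup_{f\in S_i}Orb_{H_i}(f)$. A $1$-factorization is $G$-regular if $G$ (acting sharply transitively on vertices) permutes its $1$-factors. A rainbow spanning tree is a spanning tree with exactly one edge in each $1$-factor; a complete set of rainbow spanning trees is a set of such trees partitioning the edge set. *)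

From mathcomp Require Import all_boot all_order all_fingroup all_solvable.
Set Implicit Arguments. Unset Strict Implicit. Unset Printing Implicit Defensive.
Import GroupScope.

(* Vertices of K_{2n} are the elements of a finite group gT (the group G is [set: gT]).
   An edge of K_{2n} is a 2-element subset of gT. *)
Section Defs.
Variable gT : finGroupType.

Definition Kedges : {set {set gT}} := [set e : {set gT} | #|e| == 2].

Definition eact (e : {set gT}) (g : gT) : {set gT} := e :* g.
Definition esact (U : {set {set gT}}) (g : gT) : {set {set gT}} :=
  [set eact f g | f in U].

Definition orb (K : {set gT}) (e : {set gT}) : {set {set gT}} :=
  [set eact e g | g in K].

Definition long (e : {set gT}) : bool := #|orb [set: gT] e| == #|gT|.
Definition short (e : {set gT}) : bool := (#|orb [set: gT] e|).*2 == #|gT|.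

(* ∂[x,y] = {xy^-1, yx^-1} (a single element when the edge is short) *)
Definition dif (e : {set gT}) : {set gT} :=
  [set x * y^-1 | x in e, y in e & x != y].

(* starter edges are written [x,y] (ordered), since phi depends on x *)
Definition edge (p : gT * gT) : {set gT} := [set p.1; p.2].
Definition phi (p : gT * gT) : {set gT} :=
  if long (edge p) then [set p.1; p.2] else [set p.1].

(* starter {S_i} with subgroups H_i; multiset unions are expressed by counting *)
Definition starter (r : nat) (S : 'I_r -> {set gT * gT}) (Hs : 'I_r -> {group gT}) : Prop :=
  [/\ (forall i p, p \in S i -> p.1 != p.2),
      (forall g : gT,
          (\sum_(i < r) \sum_(p in S i) nat_of_bool (g \in dif (edge p)))%N
          = nat_of_bool (g != 1)),
      (forall i, forall C, C \in lcosets (Hs i) [set: gT] ->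
          (\sum_(p in S i) #|phi p :&: C|)%N = 1%N) &
      (forall i p, p \in S i -> short (edge p) -> p.1^-1 * p.2 \in Hs i)].

Definition factor r (S : 'I_r -> {set gT * gT}) (Hs : 'I_r -> {group gT}) (i : 'I_r)
  : {set {set gT}} := \bigcup_(p in S i) orb (Hs i) (edge p).

Definition factor_orbit r (S : 'I_r -> {set gT * gT}) (Hs : 'I_r -> {group gT}) (i : 'I_r)
  : {set {set {set gT}}} := [set esact (factor S Hs i) g | g : gT].

Definition factorization r (S : 'I_r -> {set gT * gT}) (Hs : 'I_r -> {group gT})
  : {set {set {set gT}}} := \bigcup_(i < r) factor_orbit S Hs i.

Definition adj (T : {set {set gT}}) : rel gT := fun x y => [set x; y] \in T.
Definition gconnected (T : {set {set gT}}) : Prop := forall x y, connect (adj T) x y.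
Definition acyclic (T : {set {set gT}}) : Prop :=
  forall s : seq gT, uniq s -> (2 < size s)%N -> ~~ path.cycle (adj T) s.
Definition spanning_tree (T : {set {set gT}}) : Prop :=
  [/\ T \subset Kedges, gconnected T & acyclic T].
Definition rainbow_spanning_tree (FF : {set {set {set gT}}}) (T : {set {set gT}}) : Prop :=
  spanning_tree T /\ forall F, F \in FF -> #|T :&: F| = 1%N.
Definition complete_rainbow (I : finType) (FF : {set {set {set gT}}})
  (Tr : I -> {set {set gT}}) : Prop :=
  (forall k, rainbow_spanning_tree FF (Tr k)) /\
  forall e, e \in Kedges -> #|[set k | e \in Tr k]| = 1%N.
End Defs.

From mathcomp Require Import all_boot all_order all_fingroup all_solvable zify.
Import GroupScope.
Set Implicit Arguments. Unset Strict Implicit. Unset Printing Implicit Defensive.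

(* Every edge [x, y] of K_2n lies in the G-orbit of the 1-factors F_i for the
   unique i with x y^-1 in the difference set of S_i.  Hence e |: R meets F_1 only
   in e and each translate of F_i (i > 1) only in the unique edge of R_i there;
   counting the starter gives |R| <= 2n - 2, so the connected graph e |: R is a
   spanning tree, and so are its translates.  As j is central and fixes every edge
   of F_1, T_2 h = (e_2 |: R) (j h).  Every edge is an H-translate of e_1 or e_2
   (their H-orbits are disjoint, H has index 2) or of an edge of R: for a long
   difference use l or its partner l' (outside Orb_H(l)), for a short one the
   involution swapping the ends of l, which lies outside H.  Since H is the union
   of the h_k {1, j}, the n trees cover all n(2n - 1) edges; having at most 2n - 1
   edges each, they partition them. *)

Section EdgeAction.
Variable gT : finGroupType.
Implicit Types (f : {set gT}) (U T : {set {set gT}}) (a b d g x y : gT).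

Lemma eact1 f : eact f 1 = f.
Proof. exact: rcoset1. Qed.

Lemma eactM f x y : eact (eact f x) y = eact f (x * y).
Proof. by rewrite /eact rcosetM. Qed.

Lemma eactK g : cancel (fun f => eact f g) (fun f => eact f g^-1).
Proof. by move=> f; rewrite eactM mulgV eact1. Qed.

Lemma eactKV g : cancel (fun f => eact f g^-1) (fun f => eact f g).
Proof. by move=> f; rewrite eactM mulVg eact1. Qed.

Lemma card_eact f g : #|eact f g| = #|f|.
Proof. exact: card_rcoset. Qed.

Lemma eact_set2 a b g : eact [set a; b] g = [set a * g; b * g].
Proof. by apply/setP=> z; rewrite mem_rcoset !inE !(canF_eq (mulgKV g)). Qed.

Lemma mem_dif f d :
  reflect (exists a b, [/\ a \in f, b \in f, a != b & d = a * b^-1]) (d \in dif f).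
Proof.
apply: (iffP imset2P) => [[a b fa] | [a [b [fa fb ab ->]]]].
  by rewrite inE => /andP[fb ab] ->; exists a, b.
by exists a b; rewrite ?inE ?fb.
Qed.

Lemma dif_eact f g : dif (eact f g) = dif f.
Proof.
suff sub g' f' : dif (eact f' g') \subset dif f'.
  by apply/eqP; rewrite eqEsubset sub -{1}(eactK g f) sub.
apply/subsetP=> _ /mem_dif[a [b [fa fb ab ->]]]; apply/mem_dif.
exists (a * g'^-1), (b * g'^-1); rewrite -!mem_rcoset (inj_eq (mulIg _)).
by rewrite invMg invgK mulgA mulgKV.
Qed.

Lemma dif_set2P f d : #|f| = 2 -> d \in dif f ->
  exists a b, [/\ f = [set a; b], a != b & a * b^-1 = d].
Proof.
move=> f2 /mem_dif[a [b [fa fb ab ->]]]; exists a, b; split=> //.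
apply/eqP; rewrite eq_sym eqEcard f2 cards2 ab andbT.
by apply/subsetP=> z /set2P[]->.
Qed.

Lemma dif_set2 a b : a != b -> a * b^-1 \in dif [set a; b].
Proof. by move=> ab; apply/mem_dif; exists a, b; rewrite !inE !eqxx orbT. Qed.

Lemma dif_neq0 f : #|f| = 2 -> exists d, d \in dif f.
Proof. by move/eqP/cards2P=> [a [b [ab ->]]]; exists (a * b^-1); apply: dif_set2. Qed.

Lemma set2_eact_dif a b x y : a * b^-1 = x * y^-1 ->
  [set x; y] = eact [set a; b] (a^-1 * x).
Proof.
move=> Eab; rewrite eact_set2 mulKVg; congr [set _; _].
by rewrite -[y]invgK -[y^-1](mulKg x) -Eab !invMg !invgK mulgA.
Qed.

Lemma mem_esact U g f : (f \in esact U g) = (eact f g^-1 \in U).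
Proof.
apply/imsetP/idP => [[f' f'U ->] | fU]; first by rewrite eactK.
by exists (eact f g^-1); rewrite ?eactKV.
Qed.

Lemma mem_eact_esact U g f : (eact f g \in esact U g) = (f \in U).
Proof. by rewrite mem_esact eactK. Qed.

Lemma card_esact U g : #|esact U g| = #|U|.
Proof. exact/card_imset/(can_inj (eactK g)). Qed.

Lemma esactM U x y : esact (esact U x) y = esact U (x * y).
Proof. by apply/setP=> f; rewrite !mem_esact eactM invMg. Qed.

Lemma esact1 U : esact U 1 = U.
Proof. by apply/setP=> f; rewrite mem_esact invg1 eact1. Qed.

Lemma esactI U T g : esact (U :&: T) g = esact U g :&: esact T g.
Proof. by apply/setP=> f; rewrite !inE !mem_esact inE. Qed.

Lemma esactU1 f U g : esact (f |: U) g = eact f g |: esact U g.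
Proof. exact: imsetU1. Qed.

Lemma esact_Kedges T g : T \subset Kedges gT -> esact T g \subset Kedges gT.
Proof.
by move=> sT; apply/subsetP=> f; rewrite mem_esact => /(subsetP sT); rewrite !inE card_eact.
Qed.

Lemma adj_esact T g x y : adj (esact T g) x y = adj T (x * g^-1) (y * g^-1).
Proof. by rewrite /adj mem_esact eact_set2. Qed.

Lemma gconnected_esact T g : gconnected T -> gconnected (esact T g).
Proof.
move=> connT x y; have /connectP[p pT py] := connT (x * g^-1) (y * g^-1).
apply/connectP; exists (map (mulg^~ g) p).
  rewrite -[x in path _ x](mulgKV g) (@path_map _ _ (mulg^~ g)).
  by apply: sub_path pT => u v /=; rewrite adj_esact !mulgK.
by rewrite -[x in last x _](mulgKV g) (@last_map _ _ (mulg^~ g)) -py mulgKV.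
Qed.

Lemma eact_set2_swap a b : (a * b^-1) ^+ 2 = 1 -> eact [set a; b] (a^-1 * b) = [set a; b].
Proof.
rewrite expg2 => /eqP; rewrite -eq_invg_mul invMg invgK => /eqP Eba.
by rewrite eact_set2 mulKVg mulgA Eba mulgKV setUC.
Qed.

Lemma long_set2P a b : a != b -> reflect ((a * b^-1) ^+ 2 != 1) (long [set a; b]).
Proof.
move=> ab; rewrite /long /orb -(cardsT gT); apply: (iffP imset_injP).
  move=> inj; apply/eqP=> /eact_set2_swap fixab.
  have := inj (a^-1 * b) 1 (in_setT _) (in_setT _); rewrite fixab eact1.
  by move/(_ erefl)/eqP; rewrite -eq_mulVg1 (negbTE ab).
move=> sq g g' _ _ Egg'; apply/eqP; rewrite eq_mulgV1; set t := g * g'^-1.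
have fixab : eact [set a; b] t = [set a; b] by rewrite -eactM Egg' eactK.
have /set2P[at_a | at_b] : a * t \in [set a; b] by rewrite -fixab eact_set2 set21.
  by apply/eqP/(mulgI a); rewrite at_a mulg1.
have /set2P[bt_a | bt_b] : b * t \in [set a; b] by rewrite -fixab eact_set2 set22.
  have Et : t = a^-1 * b by rewrite -at_b mulKg.
  have Eba : b * a^-1 = a * b^-1 by rewrite -{2}bt_a Et !mulgA mulgK.
  by case/negP: sq; rewrite expg2 -{1}Eba mulgA mulgKV mulgV.
by apply/eqP/(mulgI b); rewrite bt_b mulg1.
Qed.

End EdgeAction.

Lemma involution_order (gT : finGroupType) (s : gT) : s != 1 -> s ^+ 2 = 1 -> #[s] = 2.
Proof.
move=> s1 s2; have /dvdn_leq : #[s] %| 2 by rewrite order_dvdn s2.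
rewrite -order_eq1 in s1; move: s1 (order_gt0 s).
by case: #[s] => [|[|[|k]]] //= _ _ /(_ isT).
Qed.

Section Index2.
Variables (gT : finGroupType) (H : {group gT}).
Hypothesis H_index : #|[set: gT] : H| = 2.

Lemma index2_mul (u v : gT) : u \notin H -> v \notin H -> u * v \in H.
Proof.
move=> uH vH; have vVH : v^-1 \in [set: gT] :\: H by rewrite !inE groupV vH.
have : u \in [set: gT] :\: H by rewrite !inE uH.
by rewrite -(rcoset_index2 (subsetT H) H_index vVH) mem_rcoset invgK.
Qed.

Hypothesis H_cyc : cyclic H.
Variable j : gT.
Hypotheses (j_in : j \in H) (j_inv : #[j] = 2).

Lemma cyclic_involution_uniq (s : gT) : s \in H -> #[s] = 2 -> s = j.
Proof.
move=> sH s_inv; have /eqP Esj : <[s]> :==: <[j]>.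
  by rewrite (eq_subG_cyclic H_cyc) ?cycle_subG // -!/(order _) s_inv j_inv.
have /set2P[s1 | //] : s \in [set 1; j] by rewrite -cycle2g // -Esj cycle_id.
by rewrite s1 order1 in s_inv.
Qed.

Lemma involution_central (x : gT) : commute j x.
Proof.
have /andP[_ nH] := index2_normal (subsetT H) H_index.
have jxH : j ^ x \in H by rewrite memJ_norm // (subsetP nH) ?inE.
by rewrite /commute conjgC (cyclic_involution_uniq jxH) ?orderJ.
Qed.

End Index2.

Section Graph.
Variable gT : finGroupType.
Implicit Type T : {set {set gT}}.

Lemma adj_sym T : symmetric (adj T).
Proof. by move=> u v; rewrite /adj setUC. Qed.

Section ConnectedCard.
Variable T : {set {set gT}}.
Hypothesis T_conn : gconnected T.

Definition path_to1 v k := [exists p : k.-tuple gT, path (adj T) v p && (last v p == 1)].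

Lemma exists_path_to1 v : exists k, path_to1 v k.
Proof.
have /connectP[p pT p1] := T_conn v 1.
by exists (size p); apply/existsP; exists (in_tuple p); rewrite pT -p1 /=.
Qed.

Definition dist1 v := ex_minn (exists_path_to1 v).

Lemma closer_neighbour v : v != 1 -> exists w, adj T v w && (dist1 w < dist1 v).
Proof.
rewrite /dist1; case: ex_minnP => k /existsP[[[|w p] /= /eqP <-]] /=.
  by move=> /eqP-> /[!eqxx].
case/andP=> /andP[vw wp] p1 kmin _; exists w; rewrite vw /=.
case: ex_minnP => k' _ /(_ (size p)); rewrite ltnS; apply.
by apply/existsP; exists (in_tuple p); rewrite wp.
Qed.

Definition parent v := odflt v [pick w | adj T v w && (dist1 w < dist1 v)].

Lemma parentP v : v != 1 -> adj T v (parent v) && (dist1 (parent v) < dist1 v).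
Proof.
move/closer_neighbour=> [w vw]; rewrite /parent; case: pickP => [w' -> // | none].
by rewrite none in vw.
Qed.

(* v |-> [v; parent v] injects the non-root vertices into the edges. *)
Lemma gconnected_card : #|gT| <= #|T| + 1.
Proof.
pose up v := [set v; parent v].
have up_inj : {in [set~ 1] &, injective up}.
  move=> v w; rewrite !inE => v1 w1 Evw; apply/eqP; apply: contraT => vw.
  have /set2P[vw' | vpw] : v \in up w by rewrite -Evw set21.
    by rewrite vw' eqxx in vw.
  have /set2P[wv | wpv] : w \in up v by rewrite Evw set21.
    by rewrite wv eqxx in vw.
  have /andP[_ lt_v] := parentP v1; have /andP[_ lt_w] := parentP w1.
  rewrite -wpv in lt_v; rewrite -vpw in lt_w.
  by have := ltn_trans lt_w lt_v; rewrite ltnn.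
have : up @: [set~ 1] \subset T.
  apply/subsetP=> f /imsetP[v]; rewrite !inE => /parentP/andP[vp _] ->; exact: vp.
move/subset_leq_card; rewrite card_in_imset // cardsC1.
by case: #|gT| => // m; rewrite addn1.
Qed.

End ConnectedCard.

Lemma gconnected_setD1 T x z : gconnected T ->
  connect (adj (T :\ [set z; x])) x z -> gconnected (T :\ [set z; x]).
Proof.
move=> T_conn xz u v; apply: connect_sub (T_conn u v) => a b ab.
have sym := sym_connect_sym (adj_sym (T :\ [set z; x])).
case: (eqVneq [set a; b] [set z; x]) => [Eab | ne_ab].
  have [] : a \in [set z; x] /\ b \in [set z; x] by rewrite -Eab set21 set22.
  by case/set2P=> -> /set2P[]->; rewrite ?connect0 // sym.
by apply: connect1; rewrite /adj !inE ne_ab.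
Qed.

Lemma gconnected_acyclic T : gconnected T -> #|T| + 1 <= #|gT| -> acyclic T.
Proof.
move=> T_conn T_card [|x [|y [|w q]]] //= /and4P[xNs yNs _ _] _.
rewrite rcons_path; apply/negP => /and4P[xy yw wq]; set z := last w q => zx.
pose T' := T :\ [set z; x].
have T'_sub : {in [predC [:: x]] &, subrel (adj T) (adj T')}.
  move=> a b /[!inE] ax bx; rewrite /adj !inE => ->; rewrite andbT.
  apply/negP => /eqP Eab; have : x \in [set a; b] by rewrite Eab set22.
  by rewrite !inE !(eq_sym x) (negbTE ax) (negbTE bx).
have xy' : adj T' x y.
  move: xy; rewrite /adj !inE => ->; rewrite andbT; apply: contraNneq yNs => Exy.
  have /set2P[yz | yx] : y \in [set z; x] by rewrite -Exy set22.
    by rewrite yz /z mem_last.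
  by rewrite yx !inE eqxx in xNs.
have yz : path (adj T') y (w :: q).
  apply: (sub_in_path T'_sub); last by rewrite /= yw.
  by apply/allP=> a aq; rewrite !inE; apply: contraNneq xNs => <-.
have /gconnected_card : gconnected T'.
  by apply: gconnected_setD1 => //; apply/connectP; exists [:: y, w & q] => //=; rewrite xy'.
have zxT : [set z; x] \in T := zx.
move: T_card; rewrite (cardsD1 [set z; x] T) zxT add1n addn1 => card_lt card_le.
by have := leq_trans card_lt card_le; rewrite addn1 ltnn.
Qed.

End Graph.

Section Counting.
Local Open Scope nat_scope.

Lemma card_sum_mem (T : finType) (A : {set T}) : #|A| = \sum_x (x \in A).
Proof. by rewrite -sum1_card big_mkcond; apply: eq_bigr => x _; case: (x \in A). Qed.

Lemma leq_card_bigcup (T I : finType) (P : pred I) (F : I -> {set T}) :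
  #|\bigcup_(i | P i) F i| <= \sum_(i | P i) #|F i|.
Proof.
elim/big_rec2: _ => [|i m A _ le_Am]; first by rewrite cards0.
by rewrite cardsU (leq_trans (leq_subr _ _)) ?leq_add2l.
Qed.

Lemma cover_once (X I : finType) (A : {set X}) (F : I -> {set X}) :
    (forall k, F k \subset A) -> (forall x, x \in A -> exists k, x \in F k) ->
    \sum_k #|F k| <= #|A| ->
  forall x, x \in A -> #|[set k | x \in F k]| = 1.
Proof.
move=> FA coverA le_sum.
have double : \sum_(x in A) #|[set k | x \in F k]| = \sum_k #|F k|.
  under eq_bigr => x _ do rewrite card_sum_mem.
  rewrite exchange_big; apply: eq_bigr => k _; rewrite card_sum_mem big_mkcond.
  apply: eq_bigr => x _; rewrite inE; case: ifP => // xNA.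
  by case: (boolP (x \in F k)) => // /(subsetP (FA k)); rewrite xNA.
have pos x : x \in A -> 0 < #|[set k | x \in F k]|.
  by case/coverA=> k xk; apply/card_gt0P; exists k; rewrite inE.
have : \sum_(x in A) (#|[set k | x \in F k]| - 1) == 0.
  by rewrite sumnB ?sum1_card ?double ?subn_eq0.
rewrite sum_nat_eq0 => /forall_inP all1 x xA.
by apply/eqP; rewrite eqn_leq pos // andbT -subn_eq0 all1.
Qed.

Lemma sum_card_setI_lcosets (gT : finGroupType) (K : {group gT}) (A : {set gT}) :
  \sum_(C in lcosets K [set: gT]) #|A :&: C| = #|A|.
Proof.
have cosets_of x : #|[set C in lcosets K [set: gT] | x \in C]| = 1.
  apply/eqP/cards1P; exists (x *: K); apply/setP=> C; rewrite !inE.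
  apply/andP/eqP => [[/lcosetsP[y _ ->] /lcoset_eqP ->] // | ->].
  by split; [apply/lcosetsP; exists x | apply: lcoset_refl].
under eq_bigr => C _ do rewrite card_sum_mem.
rewrite exchange_big card_sum_mem; apply: eq_bigr => x _.
case: (boolP (x \in A)) => [xA | xNA]; last by rewrite big1 // => C _; rewrite inE (negbTE xNA).
rewrite /= -(cosets_of x) card_sum_mem big_mkcond; apply: eq_bigr => C _.
by rewrite !inE xA; case: (C \in _).
Qed.

End Counting.

Section CompleteRainbow.
Variables (gT : finGroupType) (n : nat).
Hypotheses (n_even : ~~ odd n) (cardG : #|gT| = n.*2).
Variables (H : {group gT}) (j : gT).
Hypotheses (H_cyc : cyclic H) (H_index : #|[set: gT] : H| = 2)
  (j_in : j \in H) (j_inv : #[j] = 2).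
Variable h : 'I_(n./2) -> gT.
Hypothesis h_rep : forall C, C \in lcosets [set 1; j] H -> #|[set k | h k \in C]| = 1%N.
Variables (r : nat) (S : 'I_r.+1 -> {set gT * gT}) (Hs : 'I_r.+1 -> {group gT}).
Hypothesis S_starter : starter S Hs.
Variable e : gT * gT.
Hypotheses (S1 : S ord0 = [set e]) (de : dif (edge e) = [set j]).
Variable R : 'I_r.+1 -> {set {set gT}}.
Hypotheses
  (R_card : forall i, i != ord0 -> #|R i| = #|[set: gT] : Hs i|)
  (R_sub : forall i, i != ord0 -> R i \subset \bigcup_(F in factor_orbit S Hs i) F)
  (R_one : forall i, i != ord0 -> forall F, F \in factor_orbit S Hs i -> #|R i :&: F| = 1%N)
  (R_dif : forall i, i != ord0 ->
     \bigcup_(f in R i) dif f = \bigcup_(p in S i) dif (edge p))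
  (R_long : forall i, i != ord0 -> forall l, l \in R i -> long l ->
     #|[set l' in R i | (dif l' == dif l) && (l' \notin orb H l)]| = 1%N).
Variables (e1 e2 : {set gT}).
Hypotheses (e1_in : e1 \in factor S Hs ord0) (e2_in : e2 \in factor S Hs ord0)
  (e12_orb : orb H e1 :&: orb H e2 = set0).

Local Notation FF := (factorization S Hs).
Implicit Types (i : 'I_r.+1) (f l : {set gT}) (F : {set {set gT}}) (d g x y : gT) (p : gT * gT).

Lemma starter_neq i p : p \in S i -> p.1 != p.2.
Proof. by case: S_starter => neq _ _ _; apply: neq. Qed.

Definition dS i := \bigcup_(p in S i) dif (edge p).

Lemma dS_disjoint i i' d : d \in dS i -> d \in dS i' -> i = i'.
Proof.
have count_pos k : d \in dS k -> (0 < \sum_(p in S k) (d \in dif (edge p)))%N.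
  by case/bigcupP=> p pS dp; rewrite (bigD1 p) //= dp.
move=> /count_pos di /count_pos di'; apply/eqP/negPn/negP => ii'.
have i'i : i' != i by rewrite eq_sym.
case: S_starter => _ /(_ d) + _ _; rewrite (bigD1 i) //= (bigD1 i') //= => count1.
suff : (2 <= (d != 1%g))%N by case: (d != 1).
by rewrite -count1 (leq_add di) // (leq_trans di') ?leq_addr.
Qed.

Lemma dS_cover d : d != 1 -> exists i, d \in dS i.
Proof.
move=> d1; have [i di | dNS] := pickP (fun i => d \in dS i); first by exists i.
have : (\sum_i \sum_(p in S i) (d \in dif (edge p)) == 0)%N.
  rewrite sum_nat_eq0; apply/forall_inP=> i _; rewrite sum_nat_eq0; apply/forall_inP=> p pS.
  by rewrite eqb0; apply: contraFN (dNS i) => dp; apply/bigcupP; exists p.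
by case: S_starter => _ /(_ d) ->; rewrite d1.
Qed.

Lemma dS0 : dS ord0 = [set j].
Proof. by rewrite /dS S1 big_set1 de. Qed.

Lemma j_notin_dS i : i != ord0 -> j \notin dS i.
Proof.
by move=> i0; apply: contraNN i0 => ji; rewrite (dS_disjoint ji (_ : j \in dS ord0)) // dS0 set11.
Qed.

Definition edge_of i f := (#|f| == 2) && (dif f \subset dS i).

Lemma edge_of_eact i f g : edge_of i (eact f g) = edge_of i f.
Proof. by rewrite /edge_of card_eact dif_eact. Qed.

Lemma edge_of_starter i p : p \in S i -> edge_of i (edge p).
Proof.
move=> pS; rewrite /edge_of cards2 (starter_neq pS) /=.
by apply/subsetP=> d dp; apply/bigcupP; exists p.
Qed.

Lemma edge_of_factor i f : f \in factor S Hs i -> edge_of i f.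
Proof. by case/bigcupP=> p pS /imsetP[g _ ->]; rewrite edge_of_eact edge_of_starter. Qed.

Lemma edge_of_factor_orbit i F f : F \in factor_orbit S Hs i -> f \in F -> edge_of i f.
Proof.
by case/imsetP=> g _ ->; rewrite mem_esact => /edge_of_factor; rewrite edge_of_eact.
Qed.

Lemma edge_of_uniq i i' f : edge_of i f -> edge_of i' f -> i = i'.
Proof.
case/andP=> /eqP/dif_neq0[d df] /subsetP dS_i /andP[_ /subsetP dS_i'].
exact: dS_disjoint (dS_i d df) (dS_i' d df).
Qed.

Lemma edge_of_R i f : i != ord0 -> f \in R i -> edge_of i f.
Proof. by move=> i0 /(subsetP (R_sub i0)) /bigcupP[F FO]; apply: edge_of_factor_orbit. Qed.

Lemma edge_of0P f : edge_of ord0 f -> exists a b, [/\ f = [set a; b], a != b & a * b^-1 = j].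
Proof.
case/andP=> /eqP f2 /subsetP dfj; have [d df] := dif_neq0 f2.
by have := dfj d df; rewrite dS0 => /set1P dj; apply: dif_set2P; rewrite -?dj.
Qed.

Lemma e_dif : e.1 * e.2^-1 = j.
Proof. by apply/set1P; rewrite -de dif_set2 // (@starter_neq ord0) // S1 set11. Qed.

Lemma index_starter i : #|[set: gT] : Hs i| = (\sum_(p in S i) #|phi p|)%N.
Proof.
have [_ _ transversal _] := S_starter.
rewrite -card_lcosets -sum1_card.
under eq_bigr => C CL do rewrite -(transversal i C CL).
by rewrite exchange_big; apply: eq_bigr => p _; apply: sum_card_setI_lcosets.
Qed.

Lemma Hs0_setT : Hs ord0 :=: [set: gT].
Proof.
have e_short : ~~ long (edge e).
  have e12 : e.1 != e.2 by rewrite (@starter_neq ord0) // S1 set11.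
  by apply/negP => /(long_set2P e12); rewrite e_dif -j_inv expg_order eqxx.
apply: index1g (subsetT _) _.
by rewrite index_starter S1 big_set1 /phi (negbTE e_short) cards1.
Qed.

Lemma factor0P f : (f \in factor S Hs ord0) = edge_of ord0 f.
Proof.
apply/idP/idP => [/edge_of_factor // | /edge_of0P[a [b [-> _ abj]]]].
rewrite /factor S1 big_set1 Hs0_setT /edge (set2_eact_dif (etrans e_dif (esym abj))).
exact: imset_f.
Qed.

Lemma j_central x : commute j x.
Proof. exact: (involution_central H_index H_cyc j_in j_inv x). Qed.

Lemma mul_jj : j * j = 1.
Proof. by rewrite -expg2 -j_inv expg_order. Qed.

Lemma eact_j_fix f : edge_of ord0 f -> eact f j = f.
Proof.
case/edge_of0P=> a [b [-> _ abj]]; have -> : a = j * b by rewrite -abj mulgKV.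
by rewrite eact_set2 -mulgA -(j_central b) mulgA mul_jj mul1g setUC.
Qed.

Definition Rall := \bigcup_(i | i != ord0) R i.

Lemma edge_of_Rall f : f \in Rall -> exists2 i, i != ord0 & edge_of i f.
Proof. by case/bigcupP=> i i0 fR; exists i; rewrite ?edge_of_R. Qed.

Lemma card_tree_factor f F : edge_of ord0 f -> F \in FF -> #|(f |: Rall) :&: F| = 1%N.
Proof.
move=> f0 /bigcupP[i _ FO]; have edge_of_F := edge_of_factor_orbit FO.
have [i0 | i0] := eqVneq i ord0; first subst i.
  suff -> : (f |: Rall) :&: F = [set f] by rewrite cards1.
  apply/setP=> f'; rewrite !inE; apply/andP/eqP => [[] | ->].
    case/orP=> [/eqP // | /edge_of_Rall[i' i'0 f'i'] /edge_of_F f'0].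
    by rewrite (edge_of_uniq f'i' f'0) eqxx in i'0.
  by rewrite eqxx; case/imsetP: FO => g _ ->; rewrite mem_esact factor0P edge_of_eact.
suff -> : (f |: Rall) :&: F = R i :&: F by apply: R_one.
apply/setP=> f'; rewrite !inE.
case: (boolP (f' \in F)) => [/edge_of_F f'i | _]; last by rewrite !andbF.
rewrite !andbT; apply/orP/idP => [[/eqP f'f | /bigcupP[i' i'0 f'R]] | f'R].
- by rewrite f'f in f'i; rewrite (edge_of_uniq f'i f0) eqxx in i0.
- by rewrite (edge_of_uniq f'i (edge_of_R i'0 f'R)).
- by right; apply/bigcupP; exists i.
Qed.

Lemma factorization_esact F g : F \in FF -> esact F g \in FF.
Proof.
case/bigcupP=> i _ /imsetP[x _ ->]; apply/bigcupP; exists i => //.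
by apply/imsetP; exists (x * g); rewrite ?esactM.
Qed.

Lemma rainbow_esact T g : (forall F, F \in FF -> #|T :&: F| = 1%N) ->
  forall F, F \in FF -> #|esact T g :&: F| = 1%N.
Proof.
move=> T_rainbow F FF_F; have -> : F = esact (esact F g^-1) g by rewrite esactM mulVg esact1.
by rewrite -esactI card_esact T_rainbow ?factorization_esact.
Qed.

Lemma card_phi_le_dif i p : p \in S i -> (#|phi p| <= #|dif (edge p)|)%N.
Proof.
move=> pS; have p12 := starter_neq pS; rewrite /phi; case: ifPn => [p_long | _].
  have sq := long_set2P p12 p_long; rewrite cards2 p12.
  have sub : [set p.1 * p.2^-1; p.2 * p.1^-1] \subset dif (edge p).
    apply/subsetP=> d /set2P[]->; first exact: dif_set2.
    by rewrite /edge setUC dif_set2 // eq_sym.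
  apply: leq_trans (subset_leq_card sub); rewrite cards2; case: eqP => // E.
  by case/negP: sq; rewrite expg2 {2}E mulgA mulgKV mulgV.
have [d df] : exists d, d \in dif (edge p) by apply: dif_neq0; rewrite cards2 p12.
by rewrite cards1 card_gt0; apply/set0Pn; exists d.
Qed.

Lemma sum_index_starter : (\sum_i #|[set: gT] : Hs i| < #|gT|)%N.
Proof.
have [_ count _ _] := S_starter.
apply: (@leq_trans (\sum_i \sum_(p in S i) #|dif (edge p)|).+1).
  by rewrite ltnS leq_sum // => i _; rewrite index_starter leq_sum // => p; apply: card_phi_le_dif.
have -> : (\sum_i \sum_(p in S i) #|dif (edge p)|)%N = #|gT|.-1.
  under eq_bigr => i _ do under eq_bigr => p _ do rewrite card_sum_mem.
  under eq_bigr => i _ do rewrite exchange_big.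
  rewrite exchange_big; under eq_bigr => g _ do rewrite count.
  by rewrite -(cardsC1 1%g) card_sum_mem; apply: eq_bigr => g _; rewrite !inE.
by rewrite ltn_predL; apply/card_gt0P; exists 1%g.
Qed.

Lemma card_Rall : (#|Rall| + 2 <= #|gT|)%N.
Proof.
have := sum_index_starter; rewrite (bigD1 ord0) //=; apply: leq_trans.
have le_Rall : (#|Rall| <= \sum_(i | i != ord0) #|[set: gT] : Hs i|)%N.
  by under eq_bigr => i i0 do rewrite -(R_card i0); apply: leq_card_bigcup.
by rewrite addn2 ltnS; apply: (leq_add (indexg_gt0 _ _) le_Rall).
Qed.

Lemma h_decomp g : g \in H -> exists k, g = h k \/ g = h k * j.
Proof.
move=> gH; have coset_g : g *: [set 1; j] \in lcosets [set 1; j] H by apply/lcosetsP; exists g.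
have /card_gt0P[k] : (0 < #|[set k | h k \in g *: [set 1%g; j]]|)%N by rewrite h_rep.
rewrite !inE mem_lcoset !inE => /orP[]/eqP E; exists k.
  by left; rewrite -(mulKVg g (h k)) E mulg1.
by right; rewrite -(mulKVg g (h k)) E -mulgA mul_jj mulg1.
Qed.

Lemma cover_j_edge x y : x * y^-1 = j ->
  exists2 g, g \in H & [set x; y] = eact e1 g \/ [set x; y] = eact e2 g.
Proof.
move=> xyj; have e1_0 : edge_of ord0 e1 by rewrite -factor0P.
have e2_0 : edge_of ord0 e2 by rewrite -factor0P.
have [a1 [b1 [Ee1 _ abj1]]] := edge_of0P e1_0; have [a2 [b2 [Ee2 _ abj2]]] := edge_of0P e2_0.
have xy_e1 := set2_eact_dif (etrans abj1 (esym xyj)); rewrite -Ee1 in xy_e1.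
have xy_e2 := set2_eact_dif (etrans abj2 (esym xyj)); rewrite -Ee2 in xy_e2.
have [uH | uNH] := boolP (a1^-1 * x \in H); first by exists (a1^-1 * x); [| left].
have [vH | vNH] := boolP (a2^-1 * x \in H); first by exists (a2^-1 * x); [| right].
(* Otherwise both translating elements lie outside H, so e2 is an H-translate of e1. *)
have : e2 \in orb H e1 :&: orb H e2.
  rewrite inE; apply/andP; split; apply/imsetP; last by exists 1; rewrite ?eact1.
  exists ((a1^-1 * x) * (a2^-1 * x)^-1); first by apply: index2_mul; rewrite ?groupV.
  by rewrite -eactM -xy_e1 xy_e2 eactK.
by rewrite e12_orb inE.
Qed.

Lemma swap_notin_H i a b : i != ord0 -> a != b -> a * b^-1 \in dS i ->
  (a * b^-1) ^+ 2 = 1 -> a^-1 * b \notin H.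
Proof.
move=> i0 ab abi sq; apply/negP => abH.
have ab_inv : #[a^-1 * b] = 2.
  apply: involution_order; first by rewrite -eq_mulVg1.
  have -> : a^-1 * b = ((a * b^-1)^-1) ^ a by rewrite invMg invgK conjgE mulgKV.
  by rewrite -conjXg expVgn sq invg1 conj1g.
have abj := cyclic_involution_uniq H_cyc j_in j_inv abH ab_inv.
have : a * b^-1 = j.
  by rewrite -[b](mulKVg a) abj invMg (invg2id j_inv) mulgA -(j_central a) mulgK.
by move=> abj'; have := j_notin_dS i0; rewrite -abj' abi.
Qed.

Lemma cover_dS i x y : i != ord0 -> x * y^-1 \in dS i ->
  exists2 g, g \in H & [set x; y] \in esact Rall g.
Proof.
move=> i0 dxy.
suff [l lR [g gH xy_l]] : exists2 l, l \in R i & exists2 g, g \in H & [set x; y] = eact l g.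
  by exists g; rewrite // xy_l mem_eact_esact; apply/bigcupP; exists i.
move: (dxy); rewrite /dS -(R_dif i0) => /bigcupP[l lR dl].
have [/eqP l2 _] := andP (edge_of_R i0 lR).
have [a [b [El ab abd]]] := dif_set2P l2 dl.
have xy_l := set2_eact_dif abd; rewrite -El in xy_l.
have [uH | uNH] := boolP (a^-1 * x \in H); first by exists l => //; exists (a^-1 * x).
have [sq | sq] := eqVneq ((a * b^-1) ^+ 2) 1.
  (* short: precompose with the swap a^-1 b of l, which lies outside H *)
  exists l => //; exists ((a^-1 * b) * (a^-1 * x)).
    by apply: index2_mul => //; apply: swap_notin_H i0 ab _ sq; rewrite abd.
  by rewrite -eactM El eact_set2_swap // -El.
(* long: the partner l' of l is a translate of l by an element outside H *)
have l_long : long l by rewrite El; apply/long_set2P.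
have /card_gt0P[l' /setIdP[l'R /andP[/eqP dl' l'Nl]]] :
    (0 < #|[set l' in R i | (dif l' == dif l) && (l' \notin orb H l)]|)%N.
  by rewrite R_long.
have [/eqP l'2 _] := andP (edge_of_R i0 l'R).
have dl'' : x * y^-1 \in dif l' by rewrite dl'.
have [a' [b' [El' _ abd']]] := dif_set2P l'2 dl''.
have aa'NH : a^-1 * a' \notin H.
  apply: contra l'Nl => aa'H; apply/imsetP; exists (a^-1 * a') => //.
  by rewrite El El'; apply: set2_eact_dif; rewrite abd abd'.
exists l' => //; exists (a'^-1 * x); last by rewrite El'; apply: set2_eact_dif.
have -> : a'^-1 * x = (a^-1 * a')^-1 * (a^-1 * x) by rewrite invMg invgK -mulgA mulKVg.
by apply: index2_mul; rewrite ?groupV.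
Qed.

Hypotheses (e1_conn : gconnected (e1 |: Rall)) (e2_conn : gconnected (e2 |: Rall)).

Definition tree (b : bool) := if b then e1 |: Rall else e2 |: esact Rall j.
Definition trees (bk : bool * 'I_(n./2)) := esact (tree bk.1) (h bk.2).

Lemma tree2E : tree false = esact (e2 |: Rall) j.
Proof. by rewrite esactU1 eact_j_fix // -factor0P. Qed.

Lemma rainbow_translate f g : edge_of ord0 f -> gconnected (f |: Rall) ->
  rainbow_spanning_tree FF (esact (f |: Rall) g).
Proof.
move=> f0 f_conn; split; last by apply: rainbow_esact => F; apply: card_tree_factor.
have f_Kedges : f |: Rall \subset Kedges gT.
  apply/subsetP=> f'; rewrite !inE => /orP[/eqP-> | /edge_of_Rall[i _ /andP[]//]].
  by case/andP: f0.
split; [exact: esact_Kedges | exact: gconnected_esact | ].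
apply: gconnected_acyclic; first exact: gconnected_esact.
rewrite card_esact cardsU1; have := card_Rall; case: (f \notin Rall) => /=; lia.
Qed.

Lemma trees_rainbow bk : rainbow_spanning_tree FF (trees bk).
Proof.
by case: bk => [[] k]; rewrite /trees ?tree2E ?esactM;
  apply: rainbow_translate; rewrite // -factor0P.
Qed.

Lemma trees_cover f : f \in Kedges gT -> exists bk, f \in trees bk.
Proof.
rewrite inE => /cards2P[x [y [xy ->]]].
have [i dxy] : exists i, x * y^-1 \in dS i by apply: dS_cover; rewrite -eq_mulgV1.
have [i0 | i0] := eqVneq i ord0.
  have eact_hj f' k : f' \in factor S Hs ord0 -> eact f' (h k * j) = eact f' (h k).
    by rewrite factor0P => f'0; rewrite -(j_central (h k)) -eactM eact_j_fix.
  have [g gH xy_e] : exists2 g, g \in H & [set x; y] = eact e1 g \/ [set x; y] = eact e2 g.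
    by apply: cover_j_edge; apply/set1P; rewrite -dS0 -i0.
  have [k [Eg | Eg]] := h_decomp gH; rewrite Eg ?eact_hj // in xy_e.
  - by case: xy_e => ->; [exists (true, k) | exists (false, k)]; rewrite mem_eact_esact setU11.
  - by case: xy_e => ->; [exists (true, k) | exists (false, k)]; rewrite mem_eact_esact setU11.
have [g gH xy_R] := cover_dS i0 dxy.
have [k [Eg | Eg]] := h_decomp gH; rewrite Eg in xy_R.
  by exists (true, k); rewrite /trees /= mem_esact setU1r // -mem_esact.
exists (false, k); rewrite /trees /= mem_esact setU1r // mem_esact eactM -invMg.
by rewrite (j_central (h k)) -mem_esact.
Qed.

Lemma sum_card_trees : (\sum_bk #|trees bk| <= #|Kedges gT|)%N.
Proof.
have card_tree bk : (#|trees bk| <= (n.*2).-1)%N.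
  case: bk => [[] k]; rewrite /trees /= card_esact cardsU1 ?card_esact -cardG;
    have := card_Rall; case: (_ \notin _) => /=; lia.
apply: (@leq_trans (\sum_(bk : bool * 'I_(n./2)) (n.*2).-1)); first exact: leq_sum.
rewrite sum_nat_const card_prod card_bool card_ord mul2n halfK (negbTE n_even) subn0.
by rewrite /Kedges card_draws cardG bin2 -doubleMl doubleK.
Qed.

Theorem complete_rainbow_trees : complete_rainbow FF trees.
Proof.
split; first exact: trees_rainbow.
by apply: cover_once trees_cover sum_card_trees => bk; case: (trees_rainbow bk) => -[].
Qed.

End CompleteRainbow.

Theorem lemma1p2 (gT : finGroupType) (n : nat) (n_gt2 : (2 < n)%N) (n_even : ~~ odd n)
  (cardG : #|gT| = n.*2)
  (H : {group gT}) (H_cyc : cyclic H) (H_index : #|[set: gT] : H| = 2%N)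
  (j : gT) (j_in : j \in H) (j_inv : #[j] = 2%N)
  (h : 'I_(n./2) -> gT) (h_in : forall k, h k \in H)
  (h_rep : forall C, C \in lcosets [set 1; j] H -> #|[set k | h k \in C]| = 1%N)
  (r : nat) (S : 'I_r.+1 -> {set gT * gT}) (Hs : 'I_r.+1 -> {group gT})
  (S_starter : starter S Hs)
  (e : gT * gT) (S1 : S ord0 = [set e]) (de : dif (edge e) = [set j])
  (R : 'I_r.+1 -> {set {set gT}})
  (R_card : forall i, i != ord0 -> #|R i| = #|[set: gT] : Hs i|)
  (R_sub : forall i, i != ord0 -> R i \subset \bigcup_(F in factor_orbit S Hs i) F)
  (R_one : forall i, i != ord0 -> forall F, F \in factor_orbit S Hs i -> #|R i :&: F| = 1%N)
  (R_dif : forall i, i != ord0 ->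
     \bigcup_(f in R i) dif f = \bigcup_(p in S i) dif (edge p))
  (R_long : forall i, i != ord0 -> forall l, l \in R i -> long l ->
     #|[set l' in R i | (dif l' == dif l) && (l' \notin orb H l)]| = 1%N)
  (R_short : forall i, i != ord0 -> forall l, l \in R i -> short l ->
     forall l', l' \in R i -> dif l' = dif l -> l' = l)
  (e1 e2 : {set gT}) (e1_in : e1 \in factor S Hs ord0) (e2_in : e2 \in factor S Hs ord0)
  (e12 : e1 != e2) (e12_orb : orb H e1 :&: orb H e2 = set0)
  (conn1 : gconnected (e1 |: \bigcup_(i | i != ord0) R i))
  (conn2 : gconnected (e2 |: \bigcup_(i | i != ord0) R i)) :
  let Rall := \bigcup_(i | i != ord0) R i in
  let T1 := e1 |: Rall in
  let T2 := e2 |: esact Rall j in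
  complete_rainbow (factorization S Hs)
    (fun bk : bool * 'I_(n./2) => esact (if bk.1 then T1 else T2) (h bk.2)).
Proof.
exact: (complete_rainbow_trees n_even cardG H_cyc H_index j_in j_inv h_rep S_starter S1 de
  R_card R_sub R_one R_dif R_long e1_in e2_in e12_orb conn1 conn2).
Qed.
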